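(* Let $G$ be a graph with edge set $E$, $k\ge1$, suppose $M_k(G)$ is a connected matroid, let $B$ be a base of $M_k(G)$ and $e\in B$, and let $A$ be the component of $G\langle B\rangle$ containing $e$. Suppose $A$ has at least two cycles and $e\in E(\lfloor A\rfloor)$. Then the fundamental cocircuit $K(e,B)$ equals $(E\setminus B)\cup\{e\}$.
   Context: Graphs are finite, may have loops and parallel edges, and have no isolated vertices. A leaf is a vertex incident to exactly one edge, which is not a loop. For $X\subseteq E$, $G\langle X\rangle$ is the subgraph with edge set $X$ and vertex set the vertices incident to $X$. For $k\ge0$, $M_k(G)$ is the matroid on $E$ whose circuits are the inclusion-minimal members of $\{C\subseteq E:C\neq\emptyset,\ |C|=|V(G\langle C\rangle)|+k\}$. A matroid is connected if its ground set has at least two elements and every two elements lie in a common circuit. For a base $B$ and $e\in B$, $K(e,B)$ is the unique cocircuit $K$ with $K\cap B=\{e\}$. For a connected graph $A$ containing a cycle, its kernel $\lfloor A\rfloor$ is the subgraph obtained by repeatedly deleting leaves (with their incident edges) until no leaf remains. *)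

From mathcomp Require Import all_boot.
Set Implicit Arguments. Unset Strict Implicit. Unset Printing Implicit Defensive.

(* A graph: finite vertex type V, finite edge type E, each edge f has
   endpoints src f and dst f (loops: src f = dst f; parallel edges allowed). *)
Section Graph.
Variables (V E : finType) (src dst : E -> V).

Definition inc (f : E) (v : V) : bool := (src f == v) || (dst f == v).

Definition no_isolated : Prop := forall v : V, exists f : E, inc f v.

Definition Vof (X : {set E}) : {set V} := [set v | [exists f in X, inc f v]].

Definition adj_in (X : {set E}) : rel E :=
  [rel f g | [&& f \in X, g \in X & [exists v, inc f v && inc g v]]].

(* edge set of the component of G<X> containing e *)
Definition component (X : {set E}) (e : E) : {set E} :=
  [set f | connect (adj_in X) e f].

(* degree of v in G<X>, loops counted twice *)
Definition deg_in (X : {set E}) (v : V) : nat :=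
  \sum_(f in X) ((src f == v) + (dst f == v)).

Definition is_cycle (X : {set E}) : bool :=
  [&& X != set0,
      [forall f in X, forall g in X, connect (adj_in X) f g] &
      [forall v in Vof X, deg_in X v == 2]].

Definition is_leaf (X : {set E}) (v : V) : bool :=
  (#|[set f in X | inc f v]| == 1) &&
  [forall f in X, inc f v ==> (src f != dst f)].

Definition strip (X : {set E}) : {set E} :=
  [set f in X | ~~ [exists v, inc f v && is_leaf X v]].

(* kernel: repeat leaf deletion until none remain (#|E| rounds suffice) *)
Definition kernel (X : {set E}) : {set E} := iter #|E| strip X.

Definition Mk_circuit (k : nat) (C : {set E}) : bool :=
  minset (fun D : {set E} => (D != set0) && (#|D| == #|Vof D| + k)) C.

Definition Mk_indep (k : nat) (I : {set E}) : bool :=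
  [forall C : {set E}, Mk_circuit k C ==> ~~ (C \subset I)].

Definition Mk_base (k : nat) (B : {set E}) : bool := maxset (Mk_indep k) B.

(* cocircuit = circuit of the dual = minimal set meeting every base *)
Definition Mk_cocircuit (k : nat) (K : {set E}) : bool :=
  minset (fun D : {set E} =>
            [forall B : {set E}, Mk_base k B ==> (D :&: B != set0)]) K.

Definition Mk_connected (k : nat) : Prop :=
  1 < #|E| /\
  forall x y : E, exists C : {set E}, [/\ Mk_circuit k C, x \in C & y \in C].

End Graph.

From Pilot Require Import Defs.
From mathcomp Require Import all_boot zify.
Set Implicit Arguments. Unset Strict Implicit. Unset Printing Implicit Defensive.

(** Call [|X| - |V(X)|] the excess of an edge set [X]; a set is independent
   in [M_k(G)] iff each of its nonempty subsets has excess below [k].  Two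
   cycles give the component [A] excess at least 1, and since [e] lies on the
   kernel of [A], a subgraph of minimum degree 2, every subset of [A - e] has
   excess at most [exc A - 1].  Adding [A] to any [T] contained in [B - e]
   then shows that [B - e + f] is independent for every [f] outside [B], i.e.
   [e] lies in every fundamental circuit [C(f,B)].  A counting form of circuit
   elimination turns this into the usual description of the fundamental
   cocircuit, [K(e,B) = {e} + {f notin B | e in C(f,B)}]. *)

Section Graph.
Variables (V E : finType) (src dst : E -> V).
Local Notation inc := (inc src dst).
Local Notation Vof := (Vof src dst).
Local Notation deg := (deg_in src dst).
Implicit Types (A B X Y Z K S T W Wf Wx : {set E}) (e f g h x : E) (v : V).

Definition touches g Z := (src g \in Vof Z) || (dst g \in Vof Z).

Definition mindeg2 X := forall v, v \in Vof X -> 1 < deg X v.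

Definition connected_edges Y := forall Z, Z \subset Y -> Z != set0 -> Z != Y ->
  exists2 g, g \in Y :\: Z & touches g Z.

Lemma in_Vof X v : (v \in Vof X) = [exists f in X, inc f v].
Proof. by rewrite inE. Qed.

Lemma Vof_inc X f v : f \in X -> inc f v -> v \in Vof X.
Proof. by move=> fX fv; rewrite in_Vof; apply/existsP; exists f; rewrite fX. Qed.

Lemma src_Vof X f : f \in X -> src f \in Vof X.
Proof. by move/Vof_inc; apply; rewrite /Defs.inc eqxx. Qed.

Lemma Vof0 : Vof set0 = set0.
Proof. by apply/setP => v; rewrite in_Vof inE; apply/existsP => -[f]; rewrite inE. Qed.

Lemma VofS X Y : X \subset Y -> Vof X \subset Vof Y.
Proof.
move=> sXY; apply/subsetP => v; rewrite !in_Vof => /existsP[f /andP[fX fv]].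
by apply/existsP; exists f; rewrite (subsetP sXY).
Qed.

Lemma VofU X Y : Vof (X :|: Y) = Vof X :|: Vof Y.
Proof.
apply/setP => v; rewrite in_setU !in_Vof; apply/existsP/orP.
  by case=> f /andP[]; rewrite inE => /orP[] fX fv; [left|right];
    apply/existsP; exists f; rewrite fX.
by case=> /existsP[f /andP[fX fv]]; exists f; rewrite inE fX ?orbT.
Qed.

Lemma Vof_setU1 g Z v : (v \in Vof (g |: Z)) = inc g v || (v \in Vof Z).
Proof.
rewrite VofU inE; congr (_ || _); rewrite in_Vof; apply/existsP/idP.
  by case=> f /andP[]; rewrite inE => /eqP->.
by move=> gv; exists g; rewrite inE eqxx.
Qed.

Lemma card_VofU X Y : #|Vof (X :|: Y)| + #|Vof X :&: Vof Y| = #|Vof X| + #|Vof Y|.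
Proof. by rewrite VofU cardsUI. Qed.

Lemma card_VofI X Y : #|Vof (X :&: Y)| <= #|Vof X :&: Vof Y|.
Proof. by apply: subset_leq_card; rewrite subsetI !VofS ?subsetIl ?subsetIr. Qed.

Lemma card_Vof_setU1 g Z : touches g Z -> #|Vof (g |: Z)| <= #|Vof Z| + 1.
Proof.
move=> gZ; have [y sy] : exists y, Vof (g |: Z) \subset y |: Vof Z.
  by case/orP: gZ => gZ; [exists (dst g) | exists (src g)]; apply/subsetP => v;
    rewrite Vof_setU1 /Defs.inc in_setU1 => /orP[/orP[]/eqP<-|->];
    rewrite ?gZ ?eqxx ?orbT.
by apply: leq_trans (subset_leq_card sy) _; rewrite cardsU1 addnC leq_add2l leq_b1.
Qed.

Lemma card_Vof_setU1_both g Z :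
  src g \in Vof Z -> dst g \in Vof Z -> #|Vof (g |: Z)| <= #|Vof Z|.
Proof.
move=> sZ dZ; apply/subset_leq_card/subsetP => v.
by rewrite Vof_setU1 /Defs.inc => /orP[/orP[]/eqP<-|->].
Qed.

Lemma incidence0 Z f v : f \in Z -> v \notin Vof Z -> (src f == v) + (dst f == v) = 0.
Proof.
move=> fZ vZ; have : ~~ inc f v by apply: contra vZ; apply: Vof_inc.
by rewrite /Defs.inc negb_or => /andP[/negbTE-> /negbTE->].
Qed.

Lemma deg_notin_Vof X v : v \notin Vof X -> deg X v = 0.
Proof. by move=> vX; rewrite /deg_in big1 // => f fX; apply: incidence0 vX. Qed.

Lemma deg_gt0 X v : v \in Vof X -> 0 < deg X v.
Proof.
rewrite in_Vof => /existsP[f /andP[fX fv]]; rewrite /deg_in (bigD1 f) //=.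
by apply: leq_trans (leq_addr _ _); case/orP: fv => ->; rewrite ?addn1.
Qed.

Lemma deg_loop X h v : h \in X -> src h = v -> dst h = v -> 1 < deg X v.
Proof.
move=> hX hs hd; rewrite /deg_in (bigD1 h) //= hs hd eqxx.
exact: leq_addr.
Qed.

Lemma deg_setD K Z v : v \notin Vof Z -> deg (K :\: Z) v = deg K v.
Proof.
move=> vZ; rewrite /deg_in [in RHS](bigID (mem Z)) /= [X in _ = X + _]big1.
  by rewrite add0n; apply: eq_bigl => f; rewrite !inE andbC.
by move=> f /andP[_ fZ]; apply: incidence0 vZ.
Qed.

Lemma handshake X : \sum_(v in Vof X) deg X v = #|X| * 2.
Proof.
have -> : \sum_(v in Vof X) deg X v = \sum_v deg X v.
  rewrite [RHS](bigID (mem (Vof X))) /= [X in _ = _ + X]big1 ?addn0 //.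
  by move=> v /deg_notin_Vof.
rewrite /deg_in exchange_big /= -sum_nat_const; apply: eq_bigr => f _.
have one a : \sum_(v : V) (a == v) = 1.
  by rewrite (bigD1 a) //= eqxx big1 // => v /= av; rewrite eq_sym (negbTE av).
by rewrite big_split /= !one.
Qed.

Lemma card_Vof_deg2_but_one X (x : V) :
  (forall v, v \in Vof X -> v != x -> 1 < deg X v) -> #|Vof X| <= #|X|.
Proof.
move=> dX; have sum2 : \sum_(v in Vof X) 2 <=
    \sum_(v in Vof X) deg X v + \sum_(v in Vof X) (v == x).
  rewrite -big_split /=; apply: leq_sum => v vX.
  by case: (eqVneq v x) => [_|vx] /=; rewrite ?addn1 ?addn0 ?ltnS ?deg_gt0 ?dX.
have atmost1 : \sum_(v in Vof X) (v == x) <= 1.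
  case: (boolP (x \in Vof X)) => xX.
    by rewrite (bigD1 x) //= eqxx big1 // => v /andP[_ /negbTE->].
  by rewrite big1 // => v vX; case: eqVneq vX => // ->; rewrite (negbTE xX).
by move: sum2; rewrite handshake sum_nat_const; lia.
Qed.

(** * Excess in connected edge sets *)

Lemma excess_mono Y Z : connected_edges Y -> Z \subset Y -> Z != set0 ->
  #|Z| + #|Vof Y| <= #|Y| + #|Vof Z|.
Proof.
move=> cY; move nYZ: #|Y :\: Z| => n; elim: n Z nYZ => [|n IH] Z nYZ sZY nZ.
  have: Y :\: Z == set0 by rewrite -cards_eq0 nYZ.
  rewrite setD_eq0 => sYZ; have -> : Z = Y by apply/eqP; rewrite eqEsubset sZY.
  by rewrite addnC.
have ZY : Z != Y by apply: contra_eqN nYZ => /eqP->; rewrite setDv cards0.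
have [g] := cY Z sZY nZ ZY; rewrite inE => /andP[gZ gY] gtZ.
have sgZ : g |: Z \subset Y by rewrite subUset sub1set gY sZY.
have ngZ : g |: Z != set0 by apply/set0Pn; exists g; rewrite setU11.
have nYgZ : #|Y :\: (g |: Z)| = n.
  by move: nYZ; rewrite (cardsD1 g) !inE gZ gY setDDl setUC => -[].
have cgZ : #|g |: Z| = #|Z| + 1 by rewrite cardsU1 gZ addnC.
by move: (IH _ nYgZ sgZ ngZ) (card_Vof_setU1 gtZ) cgZ; clear; lia.
Qed.

Lemma excess_drop_closed Y K h Z : connected_edges Y -> K \subset Y -> mindeg2 K ->
  h \in K -> Z \subset Y :\ h -> Z != set0 ->
  (forall g, g \in Y :\: Z -> g != h -> ~~ touches g Z) ->
  #|Z| + #|Vof Y| + 1 <= #|Y| + #|Vof Z|.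
Proof.
move=> cY sKY dK hK sZYh nZ closedZ.
have hY : h \in Y := subsetP sKY h hK.
have hZ : h \notin Z by apply: contraL hK => /(subsetP sZYh); rewrite !inE eqxx.
have sZY : Z \subset Y := subset_trans sZYh (subD1set Y h).
have [g gYZ gtZ] : exists2 g, g \in Y :\: Z & touches g Z.
  by apply: cY => //; apply: contraNneq hZ => ->.
have {g gYZ gtZ}htZ : touches h Z.
  by case: (eqVneq g h) gtZ => [-> //|gh]; rewrite (negbTE (closedZ g gYZ gh)).
have nhZ : h |: Z != set0 by apply/set0Pn; exists h; rewrite setU11.
have shZ : h |: Z \subset Y by rewrite subUset sub1set hY sZY.
have chZ : #|h |: Z| = #|Z| + 1 by rewrite cardsU1 hZ addnC.
case: (boolP ((src h \in Vof Z) && (dst h \in Vof Z))) => [/andP[sZ dZ]|one].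
  by move: (excess_mono cY shZ nhZ) (card_Vof_setU1_both sZ dZ) chZ; clear; lia.
have [x [hx xZ xu]] : exists x : V, [/\ inc h x, x \in Vof Z &
    forall v, inc h v -> v \in Vof Z -> v = x].
  by case/orP: htZ => hZ'; [exists (src h) | exists (dst h)]; split => //;
    rewrite /Defs.inc ?eqxx ?orbT // => v /orP[]/eqP <- // vZ;
    move: one; rewrite hZ' vZ.
pose X2 := K :\: Z.
have hX2 : h \in X2 by rewrite inE hZ hK.
(* [X2] meets [V(Z)] only in [x], and off [V(Z)] it has the degrees of [K]. *)
have VX2 : #|Vof X2| <= #|X2|.
  apply: (card_Vof_deg2_but_one (x := x)) => v vX2 vx.
  have vZ : v \notin Vof Z.
    apply/negP => vZ; move: vX2; rewrite in_Vof => /existsP[g /andP[]].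
    rewrite inE => /andP[gZ gK] gv; case: (eqVneq g h) => [gh|gh].
      by subst g; move/eqP: vx; apply; apply: xu.
    have := closedZ g; rewrite inE gZ (subsetP sKY g gK) => /(_ isT gh).
    by case/orP: gv => /eqP ev; subst v; rewrite /touches vZ ?orbT.
  by rewrite deg_setD // dK // (subsetP (VofS (subsetDl K Z))).
have sZX2 : Z :|: X2 \subset Y by rewrite subUset sZY (subset_trans (subsetDl _ _)).
have nZX2 : Z :|: X2 != set0 by rewrite setU_eq0 negb_and nZ.
have := excess_mono cY sZX2 nZX2.
have := cardsUI Z X2; have := card_VofU Z X2.
have -> : Z :&: X2 = set0 by apply/setP => y; rewrite !inE; case: (y \in Z).
have : 0 < #|Vof Z :&: Vof X2|.
  by apply/card_gt0P; exists x; rewrite inE xZ (Vof_inc hX2 hx).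
rewrite cards0 => meet cV cU mono.
by move: VX2 meet cV cU mono; clear; lia.
Qed.

(* Grow [S] to a maximal [Z] inside [Y - h] without losing excess; then only [h]
   can leave [Z]. *)
Lemma excess_drop Y K h S : connected_edges Y -> K \subset Y -> mindeg2 K ->
  h \in K -> S \subset Y :\ h -> S != set0 ->
  #|S| + #|Vof Y| + 1 <= #|Y| + #|Vof S|.
Proof.
move=> cY sKY dK hK sSY nS.
pose P Z := [&& S \subset Z, Z \subset Y :\ h & #|S| + #|Vof Z| <= #|Z| + #|Vof S|].
have PS : P S by rewrite /P subxx sSY leqnn.
have [Z /maxsetP[/and3P[sSZ sZY excZ] maxZ] _] := maxset_exists PS.
have nZ : Z != set0 by apply: contraNneq nS => Z0; rewrite -subset0 -Z0.
suff closedZ g : g \in Y :\: Z -> g != h -> ~~ touches g Z.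
  by move: (excess_drop_closed cY sKY dK hK sZY nZ closedZ) excZ; clear; lia.
rewrite inE => /andP[gZ gY] gh; apply/negP => gtZ.
suff /maxZ /(_ (subsetUr _ _)) gZZ : P (g |: Z) by rewrite -gZZ setU11 in gZ.
apply/and3P; split; first exact: subset_trans sSZ (subsetUr _ _).
  by rewrite subUset sub1set !inE gh gY.
by rewrite cardsU1 gZ /=; move: (card_Vof_setU1 gtZ) excZ; clear; lia.
Qed.

(** * Kernels, components and cycles *)

Local Notation strip := (strip src dst).
Local Notation kernel := (kernel src dst).

Lemma strip_sub X : strip X \subset X.
Proof. by apply/subsetP => f; rewrite inE => /andP[]. Qed.

Lemma kernel_sub X : kernel X \subset X.
Proof.
rewrite /Defs.kernel; elim: #|E| => [|n IH] //=.
exact: subset_trans (strip_sub _) IH.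
Qed.

(* Each round that is not stationary removes an edge, so [#|E|] rounds reach
   a fixpoint. *)
Lemma strip_kernel X : strip (kernel X) = kernel X.
Proof.
have H n : strip (iter n strip X) = iter n strip X \/ #|iter n strip X| + n <= #|X|.
  elim: n => [|n IH]; first by right; rewrite addn0.
  rewrite /=; set Y := iter n strip X in IH *.
  case: (eqVneq (strip Y) Y) => [eq|ne]; first by left; rewrite !eq.
  right; case: IH => [eq|IH]; first by rewrite eq eqxx in ne.
  have : #|strip Y| < #|Y|.
    by rewrite ltnNge; apply: contra ne => le; rewrite eqEcard strip_sub le.
  lia.
rewrite /Defs.kernel; case: (H #|E|) => // small.
have : #|X| <= #|E| := max_card _.
move: small; set K := iter _ _ _ => small XE.
have /cards0_eq -> : #|K| = 0 by lia.
by apply/eqP; rewrite -subset0 strip_sub.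
Qed.

Lemma kernel_mindeg2 X : mindeg2 (kernel X).
Proof.
set K := kernel X; have fixK : strip K = K := strip_kernel X.
move=> v; rewrite in_Vof => /existsP[f /andP[fK fv]].
case: (leqP 2 #|[set g in K | inc g v]|) => [many|few].
  apply: leq_trans many _; rewrite -sum1_card /deg_in.
  rewrite (eq_bigl (fun g => (g \in K) && inc g v)) => [|g]; last by rewrite inE.
  rewrite [X in _ <= X](bigID (inc^~ v)) /=; apply: leq_trans (leq_addr _ _).
  apply: leq_sum => g /andP[_]; rewrite /Defs.inc.
  by case/orP => /eqP->; rewrite eqxx /= ?addn1 ?add1n.
have leaf1 : #|[set g in K | inc g v]| == 1.
  have : 0 < #|[set g in K | inc g v]| by apply/card_gt0P; exists f; rewrite inE fK.
  lia.
move: fK; rewrite -{1}fixK inE => /andP[_ /existsPn /(_ v)].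
rewrite fv /= /is_leaf leaf1 /= => /forall_inPn [g gK].
rewrite negb_imply negbK => /andP[gv /eqP loop].
by apply: (deg_loop gK) => //; move: gv; rewrite /Defs.inc -loop orbb => /eqP.
Qed.

Local Notation adj := (adj_in src dst).
Local Notation component := (component src dst).

Lemma adj_sym X : symmetric (adj X).
Proof.
move=> f g; apply/idP/idP => /and3P[a b /existsP[v /andP[c d]]];
by apply/and3P; split => //; apply/existsP; exists v; rewrite c d.
Qed.

Lemma component_sub B e : e \in B -> component B e \subset B.
Proof.
move=> eB; have clB : closed (adj B) (mem B) by move=> f g /and3P[-> -> _].
by apply/subsetP => f; rewrite inE => /(closed_connect clB) <-.
Qed.

Lemma mem_component B e : e \in component B e.
Proof. by rewrite inE connect0. Qed.

Lemma component_connected B e : connected_edges (component B e).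
Proof.
move=> Z sZA nZ ZA.
case: (boolP [exists g, (g \in component B e :\: Z) && touches g Z]).
  by case/existsP => g /andP[]; exists g.
move=> notouch; case/negP: ZA; rewrite eqEsubset sZA /=.
have csym := sym_connect_sym (adj_sym B).
have step f g : adj B f g -> f \in Z -> g \in Z.
  move=> fg fZ; apply: contraT => gZ; case/negP: notouch; apply/existsP; exists g.
  have := subsetP sZA f fZ; rewrite !inE => ef.
  rewrite gZ (connect_trans ef (connect1 fg)) /=.
  case/and3P: fg => _ _ /existsP[v /andP[fv gv]].
  by rewrite /touches; case/orP: gv => /eqP->; rewrite (Vof_inc fZ fv) ?orbT.
have closedZ : closed (adj B) (mem Z) by apply: intro_closed.
case/set0Pn: nZ => z zZ; apply/subsetP => y; rewrite inE => ey.
have := subsetP sZA z zZ; rewrite inE => ez.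
have zy : connect (adj B) z y by apply: connect_trans ey; rewrite csym.
by rewrite -(closed_connect closedZ zy).
Qed.

Local Notation is_cycle := (is_cycle src dst).

Lemma cycle_mindeg2 C : is_cycle C -> mindeg2 C.
Proof. by case/and3P => _ _ /forall_inP dC v /dC/eqP->. Qed.

Lemma card_Vof_cycle C : is_cycle C -> #|Vof C| = #|C|.
Proof.
case/and3P => _ _ /forall_inP dC; have := handshake C.
rewrite (eq_bigr (fun _ => 2)) => [|v /dC/eqP //].
by rewrite sum_nat_const; clear; lia.
Qed.

Lemma excess_two_cycles A C1 C2 : connected_edges A ->
  is_cycle C1 -> is_cycle C2 -> C1 != C2 -> C1 \subset A -> C2 \subset A ->
  #|Vof A| < #|A|.
Proof.
move=> cA; wlog [h hC2 hC1] : C1 C2 / exists2 h, h \in C2 & h \notin C1.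
  move=> gen c1 c2 ne s1 s2; case: (boolP (C2 \subset C1)) => [s21|/subsetPn[h]].
    have /subsetPn[h hC1 hC2] : ~~ (C1 \subset C2).
      by apply: contra ne => s12; rewrite eqEsubset s12.
    by apply: (gen C2 C1) => //; [exists h | rewrite eq_sym].
  by move=> hC2 hC1; apply: (gen C1 C2) => //; exists h.
move=> c1 c2 _ s1 s2; have [nC1 _ _] := and3P c1.
have sC1 : C1 \subset A :\ h.
  apply/subsetP => y yC; rewrite in_setD1 (subsetP s1) // andbT.
  by apply: contraNneq hC1 => <-.
have := excess_drop cA s2 (cycle_mindeg2 c2) hC2 sC1 nC1.
by rewrite (card_Vof_cycle c1); clear; lia.
Qed.

Lemma excess_off_kernel A e S : connected_edges A -> e \in kernel A ->
  #|Vof A| < #|A| -> S \subset A :\ e -> #|S| + #|Vof A| < #|A| + #|Vof S|.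
Proof.
move=> cA eK excA sS; case: (eqVneq S set0) => [->|nS].
  by rewrite Vof0 !cards0 add0n addn0.
by rewrite -addn1; exact: excess_drop cA (kernel_sub A) (@kernel_mindeg2 A) eK sS nS.
Qed.

(** * The matroid [M_k(G)] *)

Section Matroid.
Variable k : nat.
Local Notation circuit := (Mk_circuit src dst k).
Local Notation indep := (Mk_indep src dst k).
Local Notation base := (Mk_base src dst k).
Local Notation cocircuit := (Mk_cocircuit src dst k).

(* A minimal nonempty set of excess at least [k] has excess exactly [k]:
   removing an edge lowers the excess by at most one. *)
Lemma dense_circuit W : W != set0 -> #|Vof W| + k <= #|W| ->
  exists2 C, circuit C & C \subset W.
Proof.
move=> nW dW; pose P D := (D != set0) && (#|Vof D| + k <= #|D|).
have PW : P W by rewrite /P nW dW.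
have [D /minsetP[/andP[nD dD] minD] sDW] := minset_exists PW.
exists D => //; apply/minsetP; split => [|D' /andP[nD' /eqP eD'] sD'D].
  rewrite nD eqn_leq dD andbT leqNgt; apply/negP => big.
  case/set0Pn: nD => d Dd; have cD := cardsD1 d D; rewrite Dd in cD.
  case: (eqVneq (D :\ d) set0) => [D0|nD0].
    have : 0 < #|Vof D| by apply/card_gt0P; exists (src d); apply: src_Vof.
    rewrite D0 cards0 in cD.
    by move: cD big; clear; lia.
  suff /minD /(_ (subD1set D d)) DdD : P (D :\ d) by rewrite -DdD setD11 in Dd.
  rewrite /P nD0 /=; have := subset_leq_card (VofS (subD1set D d)).
  by move: cD big; clear; lia.
by apply: minD sD'D; rewrite /P nD' eD' /=.
Qed.

Lemma Mk_indepP X :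
  reflect (forall W, W \subset X -> W != set0 -> #|W| < #|Vof W| + k) (indep X).
Proof.
apply: (iffP forallP) => [ind W sWX nW | sparse C].
  rewrite ltnNge; apply/negP => dW; have [C cC sCW] := dense_circuit nW dW.
  by have := ind C; rewrite cC (subset_trans sCW sWX).
apply/implyP => /minsetp /andP[nC /eqP cC]; apply/negP => sCX.
by have := sparse C sCX nC; rewrite cC ltnn.
Qed.

Lemma Mk_depP X : reflect
  (exists W, [/\ W \subset X, W != set0 & #|Vof W| + k <= #|W|]) (~~ indep X).
Proof.
apply: (iffP idP) => [/forallPn[C] | [W [sWX nW dW]]].
  rewrite negb_imply negbK => /andP[/minsetp /andP[nC /eqP cC] sCX].
  by exists C; rewrite cC.
by apply/negP => /Mk_indepP /(_ W sWX nW); lia.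
Qed.

Lemma Mk_indepS X Y : X \subset Y -> indep Y -> indep X.
Proof.
move=> sXY /Mk_indepP iY; apply/Mk_indepP => W sWX; exact: iY (subset_trans sWX sXY).
Qed.

Lemma base_setU1_dep B f : base B -> f \notin B -> ~~ indep (f |: B).
Proof.
by move=> bB; apply: contra => iBf; rewrite -(maxsetsup bB iBf (subsetUr _ _)) setU11.
Qed.

Lemma indep_exchange B A e f : indep B -> A \subset B -> e \in A ->
  (forall S, S \subset A :\ e -> #|S| + #|Vof A| < #|A| + #|Vof S|) ->
  indep (f |: (B :\ e)).
Proof.
move=> /Mk_indepP sparseB sAB eA excA; apply/Mk_indepP => W sW nW.
set T := W :\ f.
have sT : T \subset B :\ e.
  apply/subsetP => y; rewrite /T in_setD1 => /andP[yf yW].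
  by move: (subsetP sW y yW); rewrite in_setU1 (negbTE yf).
have sTA : T :|: A \subset B by rewrite subUset sAB (subset_trans sT (subD1set B e)).
have nTA : T :|: A != set0 by apply/set0Pn; exists e; rewrite inE eA orbT.
have sS : T :&: A \subset A :\ e.
  apply/subsetP => y; rewrite inE => /andP[/(subsetP sT)].
  by rewrite !in_setD1 => /andP[-> _] ->.
have cW : #|W| <= #|T| + 1 by rewrite (cardsD1 f W) addnC leq_add2l leq_b1.
have vT : #|Vof T| <= #|Vof W| := subset_leq_card (VofS (subD1set W f)).
move: (sparseB _ sTA nTA) (excA _ sS) (cardsUI T A) (card_VofU T A) (card_VofI T A).
by move: cW vT; clear; lia.
Qed.

Lemma dense_setU1 B f W : indep B -> W \subset f |: B -> W :\ f != set0 ->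
  #|Vof W| + k <= #|W| ->
  [/\ f \in W, W :\ f \subset B, #|W :\ f| + 1 = #|Vof (W :\ f)| + k
    & Vof (W :\ f) = Vof W].
Proof.
move=> /Mk_indepP sparseB sW nT dW.
have sT : W :\ f \subset B.
  apply/subsetP => y; rewrite in_setD1 => /andP[yf yW].
  by move: (subsetP sW y yW); rewrite in_setU1 (negbTE yf).
have sparseT := sparseB _ sT nT.
have vT := VofS (subD1set W f); have lvT := subset_leq_card vT.
have cW := cardsD1 f W; case fW : (f \in W) in cW.
  split => //; first by move: cW sparseT lvT dW; clear; lia.
  by apply/eqP; rewrite eqEcard vT; move: cW sparseT dW; clear; lia.
by exfalso; move: cW sparseT lvT dW; clear; lia.
Qed.

Lemma fundamental_dense B e f : base B -> f \notin B -> indep (f |: (B :\ e)) ->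
  exists W, [/\ W \subset f |: B, e \in W & #|Vof W| + k <= #|W|].
Proof.
move=> bB fB iBef; have /Mk_depP[W [sW nW dW]] := base_setU1_dep bB fB.
exists W; split => //; apply: contraTT dW => eW; rewrite -ltnNge.
apply: (elimT (Mk_indepP _) iBef) nW; apply/subsetP => y yW.
have ye : y != e by apply: contraNneq eW => <-.
by move: (subsetP sW y yW); rewrite !inE ye.
Qed.

(* A counting instance of circuit elimination on [e]. *)
Lemma fundamental_pair_dep B e f x Wf Wx : indep B -> e \in B ->
  f \notin B -> x \notin B -> f != x ->
  Wf \subset f |: B -> e \in Wf -> #|Vof Wf| + k <= #|Wf| ->
  Wx \subset x |: B -> e \in Wx -> #|Vof Wx| + k <= #|Wx| ->
  ~~ indep (f |: (x |: (B :\ e))).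
Proof.
move=> iB eB fB xB fx sWf eWf dWf sWx eWx dWx.
have eTf : e \in Wf :\ f by rewrite in_setD1 eWf andbT; apply: contraNneq fB => <-.
have eTx : e \in Wx :\ x by rewrite in_setD1 eWx andbT; apply: contraNneq xB => <-.
have [fWf sTf cTf vTf] := dense_setU1 iB sWf (introT (set0Pn _) (ex_intro _ e eTf)) dWf.
have [xWx sTx cTx vTx] := dense_setU1 iB sWx (introT (set0Pn _) (ex_intro _ e eTx)) dWx.
set Tf := Wf :\ f in eTf sTf cTf vTf; set Tx := Wx :\ x in eTx sTx cTx vTx.
have sU : Tf :|: Tx \subset B by rewrite subUset sTf sTx.
have eU : e \in Tf :|: Tx by rewrite inE eTf.
have /Mk_indepP sparseB := iB.
have sparseI : #|Tf :&: Tx| < #|Vof (Tf :&: Tx)| + k.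
  by apply: sparseB; [rewrite subIset ?sTf | apply/set0Pn; exists e; rewrite inE eTf].
apply/Mk_depP; exists (f |: (x |: ((Tf :|: Tx) :\ e))); split.
- by rewrite !setUS // setSD.
- by apply/set0Pn; exists f; rewrite setU11.
have fU : f \notin x |: ((Tf :|: Tx) :\ e).
  by rewrite in_setU1 negb_or fx; apply: contra fB => /setD1P[_ /(subsetP sU)].
have xU : x \notin (Tf :|: Tx) :\ e.
  by apply: contra xB => /setD1P[_ /(subsetP sU)].
have vW : Vof (f |: (x |: ((Tf :|: Tx) :\ e))) \subset Vof (Tf :|: Tx).
  apply/subsetP => v; rewrite !Vof_setU1 VofU in_setU.
  case/or3P => [fv|xv|/(subsetP (VofS (subD1set _ e)))]; last by rewrite VofU in_setU.
  - by rewrite vTf (Vof_inc fWf fv).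
  - by rewrite vTx (Vof_inc xWx xv) orbT.
rewrite !cardsU1 fU xU /=; have := cardsD1 e (Tf :|: Tx); rewrite eU /=.
move: (subset_leq_card vW) (cardsUI Tf Tx) (card_VofU Tf Tx) (card_VofI Tf Tx).
by move: sparseI cTf cTx; clear; lia.
Qed.

Lemma fundamental_cocircuit B e : base B -> e \in B ->
  (forall f, f \notin B -> indep (f |: (B :\ e))) -> cocircuit (~: B :|: [set e]).
Proof.
move=> bB eB exch; have iB : indep B := maxsetp bB.
have dep2 f x : f \notin B -> x \in ~: B :|: [set e] -> x != f ->
    ~~ indep (f |: (x |: (B :\ e))).
  move=> fB; rewrite !inE => /orP[xB|/eqP->] xf; last by rewrite setD1K ?base_setU1_dep.
  have [Wf [sWf eWf dWf]] := fundamental_dense bB fB (exch f fB).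
  have [Wx [sWx eWx dWx]] := fundamental_dense bB xB (exch x xB).
  have fx : f != x by rewrite eq_sym.
  exact: fundamental_pair_dep iB eB fB xB fx sWf eWf dWf sWx eWx dWx.
apply/minsetP; split.
  apply/forallP => B'; apply/implyP => bB'; apply: contraT; rewrite negbK => /eqP DB'.
  have sB' : B' \subset B :\ e.
    apply/subsetP => y yB'; move/setP/(_ y): DB'.
    rewrite !inE yB' andbT => /negbT; rewrite negb_or negbK => /andP[yB ye].
    by rewrite yB ye.
  have BB' := maxsetsup bB' iB (subset_trans sB' (subD1set B e)).
  by move: (subsetP sB' e); rewrite -BB' !inE eqxx => /(_ eB).
move=> D' meetD' sD'; apply/eqP; rewrite eqEsubset sD' /=.
apply/subsetP => f fD; apply: contraT => fD'.
have meet B' : base B' -> exists2 x, x \in D' & x \in B'.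
  move=> bB'; move/forallP/(_ B')/implyP/(_ bB')/set0Pn: meetD' => [x].
  by rewrite inE => /andP[]; exists x.
move: (fD); rewrite !inE => /orP[fB|/eqP fe]; last first.
  have [x xD' xB] := meet B bB; have := subsetP sD' x xD'.
  by rewrite !inE xB /= => /eqP xe; move: fD'; rewrite fe -xe xD'.
have [B' bB' sB'] := maxset_exists (exch f fB).
have [x xD' xB'] := meet B' bB'.
have xf : x != f by apply: contraNneq fD' => <-.
case/negP: (dep2 f x fB (subsetP sD' x xD') xf).
by apply: Mk_indepS (maxsetp bB'); rewrite setUCA subUset sub1set xB'.
Qed.

End Matroid.
End Graph.

Theorem mainTheorem20 (V E : finType) (src dst : E -> V)
  (hG : no_isolated src dst) (k : nat) (hk : 1 <= k)
  (hconn : Mk_connected src dst k)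
  (B : {set E}) (hB : Mk_base src dst k B) (e : E) (he : e \in B)
  (h2 : exists C1 C2 : {set E},
        [/\ is_cycle src dst C1, is_cycle src dst C2, C1 != C2,
            C1 \subset component src dst B e & C2 \subset component src dst B e])
  (hker : e \in kernel src dst (component src dst B e)) :
  Mk_cocircuit src dst k (~: B :|: [set e]) /\
  (forall K : {set E}, Mk_cocircuit src dst k K -> K :&: B = [set e] ->
     K = ~: B :|: [set e]).
Proof.
set A := component src dst B e in h2 hker.
have cA : connected_edges src dst A := @component_connected _ _ src dst B e.
have excA : #|Vof src dst A| < #|A|.
  case: h2 => C1 [C2 [c1 c2 neC sC1 sC2]].
  exact: excess_two_cycles cA c1 c2 neC sC1 sC2.
have exch f : f \notin B -> Mk_indep src dst k (f |: (B :\ e)).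
  move=> _; apply: (indep_exchange _ (maxsetp hB) (component_sub src dst he)).
    exact: mem_component.
  by move=> S; apply: excess_off_kernel cA hker excA.
have cocD := fundamental_cocircuit hB he exch.
split=> // K cK KB; apply: (minsetP cocD).2 (minsetp cK) _.
apply/subsetP => y yK; rewrite !inE; case: (boolP (y \in B)) => //= yB.
by move/setP/(_ y): KB; rewrite !inE yK yB.
Qed.
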